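(* Let $D\ge1$ and $0\le d\le D$. Let $G=G_1\,\Box\,\cdots\,\Box\,G_D$ be a cartesian product in which exactly $d$ factors are cycle digraphs $C_{n_\mu}$ ($n_\mu\ge3$ arbitrary) and the remaining $D-d$ factors are simple directed paths $P_{n_\mu}$ ($n_\mu\ge2$ arbitrary). Then $$|V|\cdot r-\operatorname{rank}\mathcal D(G)\le r\cdot\prod_{\mu=1}^D\big(\beta_0(G_\mu)+\beta_1(G_\mu)\big)=r\cdot 2^d,$$ equivalently $\dim\ker\mathcal D(G)/r\le 2^d$.
   Context: The cycle digraph $C_n$ ($n\ge3$) has vertex set $\{1,\dots,n\}$ and edges $i\to i+1$ for $1\le i\le n-1$ together with $n\to1$. The simple directed path $P_n$ ($n\ge2$) has vertex set $\{1,\dots,n\}$ and edges $i\to i+1$ for $1\le i\le n-1$. For a directed graph without multiple edges, the anti-symmetrized adjacency matrix $A_{\mathrm{as}}$ is the $|V|\times|V|$ matrix with: - $(A_{\mathrm{as}})_{ij}=1$ if an edge leaves $i$ and enters $j$; - $(A_{\mathrm{as}})_{ij}=-1$ if an edge leaves $j$ and enters $i$; - $(A_{\mathrm{as}})_{ij}=0$ otherwise. Let $\gamma_1,\dots,\gamma_D$ be complex $r\times r$ matrices satisfying $\gamma_\mu\gamma_\nu+\gamma_\nu\gamma_\mu=2\delta_{\mu\nu}\mathbf 1_r$, and set $r=\operatorname{rank}\gamma$. For $G=G_1\Box\cdots\Box G_D$ with $G_\mu$ having $n_\mu$ vertices, $|V|=\prod_\mu n_\mu$ and $$\mathcal D(G)=\sum_{\mu=1}^D\Big(\mathbf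 1_{n_D}\otimes\cdots\otimes\mathbf 1_{n_{\mu+1}}\otimes A_{\mathrm{as}}(G_\mu)\otimes\mathbf 1_{n_{\mu-1}}\otimes\cdots\otimes\mathbf 1_{n_1}\Big)\otimes\gamma_\mu,$$ where $\otimes$ is the Kronecker product and $\mathbf 1_k$ is the $k\times k$ identity. Betti numbers of a factor graph: $\beta_0$ is the number of connected components and $\beta_1=|E|-|V|+\beta_0$. *)

From HB Require Import structures.
From mathcomp Require Import all_boot all_order all_algebra.
From mathcomp Require Import reals.
From mathcomp Require Export complex mxtens.
Set Implicit Arguments. Unset Strict Implicit. Unset Printing Implicit Defensive.
Import Order.TTheory GRing.Theory Num.Theory.
Local Open Scope ring_scope.

(* A finite directed graph without multiple edges: vertex set 'I_nv,
   edge set a set of ordered pairs (source, target). *)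
Record digraph := Digraph { nv : nat; edges : {set 'I_nv * 'I_nv} }.

(* Cycle digraph C_n on vertices 0..n-1 (= 1..n shifted): edges i -> i+1 mod n. *)
Definition cycle_digraph (n : nat) : digraph :=
  @Digraph n [set e : 'I_n * 'I_n | val e.2 == ((val e.1).+1 %% n)%N].

Definition path_digraph (n : nat) : digraph :=
  @Digraph n [set e : 'I_n * 'I_n | val e.2 == (val e.1).+1 :> nat].

Definition Aas (K : pzRingType) (G : digraph) : 'M[K]_(nv G) :=
  \matrix_(i, j) ((((i, j) \in edges G) : nat)%:R - (((j, i) \in edges G) : nat)%:R).

(* Underlying undirected adjacency (connectivity ignores orientation). *)
Definition und_adj (G : digraph) : rel 'I_(nv G) :=
  fun x y => ((x, y) \in edges G) || ((y, x) \in edges G).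

Definition beta0 (G : digraph) : nat := n_comp (@und_adj G) predT.
(* beta1 = |E| - |V| + beta0 (written so that no truncation occurs). *)
Definition beta1 (G : digraph) : nat := (#|edges G| + beta0 G - nv G)%N.

(* Product of the vertex counts n_0 * ... * n_(k-1), built to match kron_fac. *)
Fixpoint prodn (n : nat -> nat) (k : nat) : nat :=
  match k with 0 => 1%N | k'.+1 => (n k' * prodn n k')%N end.

Fixpoint kron_fac (K : pzRingType) (n : nat -> nat) (A : forall i, 'M[K]_(n i))
  (k : nat) : 'M[K]_(prodn n k) :=
  match k with
  | 0 => 1%:M
  | k'.+1 => A k' *t kron_fac A k'
  end.

(* The operator D(G) for factors G_0,...,G_(D-1) (paper's G_1,...,G_D) and
   gamma matrices gamma_0,...,gamma_(D-1):
   sum_mu (1 (x) ... (x) A_as(G_mu) (x) ... (x) 1) (x) gamma_mu. *)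
Definition dirac (K : pzRingType) (D r : nat) (G : nat -> digraph)
  (gamma : nat -> 'M[K]_r) : 'M[K]_(prodn (fun i => nv (G i)) D * r) :=
  \sum_(mu < D)
     kron_fac (fun i => if i == val mu then @Aas K (G i) else 1%:M) D *t gamma mu.

From HB Require Import structures.
From mathcomp Require Import all_boot all_order all_algebra.
From mathcomp Require Import reals complex mxtens.
From mathcomp Require Import zify.
Set Implicit Arguments. Unset Strict Implicit. Unset Printing Implicit Defensive.
Import Order.TTheory GRing.Theory Num.Theory.
Local Open Scope ring_scope.

(* Write X_mu for A_as(G_mu) acting on the mu-th tensor factor. The X_mu
   commute, so the Clifford relations give D(G)^2 = L (x) 1 with
   L = sum_mu X_mu^2. Over the reals the X_mu are skew-symmetric, hence
   u L u^T = - sum_mu |u X_mu|^2 and ker L is the intersection of the ker X_mu,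
   which lies in the tensor product of the ker A_as(G_mu). Therefore
   dim ker D(G) <= dim ker D(G)^2 = r dim ker L <= r prod_mu dim ker A_as(G_mu),
   and dim ker A_as is at most 1 for a path and at most 2 for a cycle, which
   is beta_0 + beta_1 in both cases. *)

Section TensorLinearity.
Variable K : pzRingType.

Lemma tensmxDl m n p q (A B : 'M[K]_(m, n)) (C : 'M[K]_(p, q)) :
  (A + B) *t C = A *t C + B *t C.
Proof. by apply/matrixP => i j; rewrite !mxE mulrDl. Qed.

Lemma tensmxDr m n p q (A : 'M[K]_(m, n)) (B C : 'M[K]_(p, q)) :
  A *t (B + C) = A *t B + A *t C.
Proof. by apply/matrixP => i j; rewrite !mxE mulrDr. Qed.

Lemma tensmxNl m n p q (A : 'M[K]_(m, n)) (C : 'M[K]_(p, q)) :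
  (- A) *t C = - (A *t C).
Proof. by apply/matrixP => i j; rewrite !mxE mulNr. Qed.

Lemma tensmxNr m n p q (A : 'M[K]_(m, n)) (C : 'M[K]_(p, q)) :
  A *t (- C) = - (A *t C).
Proof. by apply/matrixP => i j; rewrite !mxE mulrN. Qed.

Lemma tensmx_suml m n p q I (r : seq I) (P : pred I)
    (A : I -> 'M[K]_(m, n)) (C : 'M[K]_(p, q)) :
  (\sum_(i <- r | P i) A i) *t C = \sum_(i <- r | P i) A i *t C.
Proof.
by apply: (big_morph (fun X => X *t C)) => [X Y|]; rewrite ?tensmxDl ?tens0mx.
Qed.

Lemma tens1mx1 a b : (1%:M : 'M[K]_a) *t (1%:M : 'M[K]_b) = 1%:M.
Proof.
apply/matrixP => i j.
case: (mxtens_indexP i) => i1 i2; case: (mxtens_indexP j) => j1 j2.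
rewrite tensmxE !mxE -natrM mulnb (inj_eq (can_inj (@mxtens_indexK a b))).
by rewrite xpair_eqE.
Qed.

End TensorLinearity.

(* Row-major vectorization, compatible with the index order of [*t]. *)
Definition vec_tens (K : Type) p q (F : 'M[K]_(p, q)) : 'rV[K]_(p * q) :=
  \row_k F (mxtens_unindex k).1 (mxtens_unindex k).2.

Lemma vec_tens_inj (K : Type) p q : injective (@vec_tens K p q).
Proof.
move=> F F' eqFF'; apply/matrixP => i j.
have := congr1 (fun v : 'rV_(p * q) => v 0 (mxtens_index (i, j))) eqFF'.
by rewrite !mxE mxtens_indexK.
Qed.

Lemma vec_tens_surj (K : Type) p q (u : 'rV[K]_(p * q)) :
  exists F : 'M_(p, q), u = vec_tens F.
Proof.
exists (\matrix_(i, j) u 0 (mxtens_index (i, j))).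
by apply/rowP => k; rewrite !mxE mxtens_unindexK.
Qed.

Lemma vec_tens0 (K : nmodType) p q : vec_tens (0 : 'M[K]_(p, q)) = 0.
Proof. by apply/rowP => k; rewrite !mxE. Qed.

Lemma sum_mxtens_index (K : nmodType) p q (g : 'I_(p * q) -> K) :
  \sum_(l < p * q) g l = \sum_(i < p) \sum_(j < q) g (mxtens_index (i, j)).
Proof.
rewrite (reindex (@mxtens_index p q)) /=; last first.
  by exists (@mxtens_unindex p q) => x _; rewrite ?mxtens_indexK ?mxtens_unindexK.
by rewrite pair_big /=; apply: eq_bigr => -[].
Qed.

Lemma vec_tens_mul (K : comPzRingType) p q p' q' (F : 'M[K]_(p, q))
    (X : 'M[K]_(p, p')) (Y : 'M[K]_(q, q')) :
  vec_tens F *m (X *t Y) = vec_tens (X^T *m F *m Y).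
Proof.
apply/rowP => k; case: (mxtens_indexP k) => a b.
rewrite !mxE sum_mxtens_index mxtens_indexK /=.
under eq_bigr do under eq_bigr do rewrite !mxE !mxtens_indexK /=.
rewrite exchange_big /=; apply: eq_bigr => j _.
rewrite !mxE mulr_suml; apply: eq_bigr => l _.
by rewrite !mxE mulrA [F _ _ * _]mulrC.
Qed.

Lemma vec_tens_sub_kermx_tens (F : fieldType) n m s (A : 'M[F]_n)
    (W : 'M[F]_(s, m)) (V : 'M[F]_(n, m)) :
  A^T *m V = 0 -> (V <= W)%MS -> (vec_tens V <= row_base (kermx A) *t W)%MS.
Proof.
move=> AV0 VW.
have /submxP [C defVT] : (V^T <= row_base (kermx A))%MS.
  by rewrite eq_row_base sub_kermx -[A]trmxK -trmx_mul AV0 trmx0.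
have -> : V = (row_base (kermx A))^T *m (C^T *m pinvmx W) *m W.
  by rewrite [_ *m (_ *m _)]mulmxA -trmx_mul -defVT trmxK mulmxKpV.
by rewrite -vec_tens_mul submxMl.
Qed.

Lemma kermx_tens1_rank (F : fieldType) m r (M : 'M[F]_m) :
  (\rank (kermx (M *t (1%:M : 'M[F]_r))) <= (m - \rank M) * r)%N.
Proof.
rewrite -mxrank_ker; apply: leq_trans (rank_leq_row (row_base (kermx M) *t 1%:M)).
apply: mxrankS; apply/row_subP => i.
have : row i (kermx (M *t (1%:M : 'M[F]_r))) *m (M *t 1%:M) = 0.
  by apply/eqP; rewrite -sub_kermx row_sub.
have [V ->] := vec_tens_surj (row i (kermx (M *t (1%:M : 'M[F]_r)))).
rewrite vec_tens_mul mulmx1 -(vec_tens0 F) => /vec_tens_inj MV0.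
by apply: vec_tens_sub_kermx_tens => //; apply: submx1.
Qed.

Section KronFac.
Variable n : nat -> nat.

Lemma eq_kron_fac (K : pzRingType) (A B : forall i, 'M[K]_(n i)) k :
  (forall i, (i < k)%N -> A i = B i) -> kron_fac A k = kron_fac B k.
Proof.
by elim: k => [|k IH] //= eqAB; rewrite eqAB // IH // => i /ltnW; apply: eqAB.
Qed.

Lemma kron_fac1 (K : pzRingType) k :
  kron_fac (fun i => (1%:M : 'M[K]_(n i))) k = 1%:M.
Proof. by elim: k => [|k IH] //=; rewrite IH tens1mx1. Qed.

Lemma kron_fac_mul (K : comPzRingType) (A B : forall i, 'M[K]_(n i)) k :
  kron_fac A k *m kron_fac B k = kron_fac (fun i => A i *m B i) k.
Proof. by elim: k => [|k IH] /=; rewrite ?mulmx1 // tensmx_mul IH. Qed.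

Lemma map_kron_fac (K K' : pzRingType) (f : {rmorphism K -> K'})
    (A : forall i, 'M[K]_(n i)) k :
  map_mx f (kron_fac A k) = kron_fac (fun i => map_mx f (A i)) k.
Proof. by elim: k => [|k IH] /=; rewrite ?map_mx1 // map_mxT IH. Qed.

Definition kron_at (K : pzRingType) (A : forall i, 'M[K]_(n i)) k mu :=
  kron_fac (fun i => if i == mu then A i else 1%:M) k.

Lemma kron_at_comm (K : comPzRingType) (A : forall i, 'M[K]_(n i)) k mu nu :
  kron_at A k mu *m kron_at A k nu = kron_at A k nu *m kron_at A k mu.
Proof.
rewrite !kron_fac_mul; apply: eq_kron_fac => i _.
by case: (i == mu); case: (i == nu); rewrite ?mulmx1 ?mul1mx.
Qed.

Lemma kron_at_ge (K : pzRingType) (A : forall i, 'M[K]_(n i)) k mu :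
  (k <= mu)%N -> kron_at A k mu = 1%:M.
Proof.
move=> le_k_mu; rewrite -(kron_fac1 K k); apply: eq_kron_fac => i lt_i_k.
by rewrite ltn_eqF // (leq_trans lt_i_k).
Qed.

Lemma tr_kron_at (K : pzRingType) (A : forall i, 'M[K]_(n i)) k mu :
  (forall i, (A i)^T = - A i) -> (mu < k)%N ->
  (kron_at A k mu)^T = - kron_at A k mu.
Proof.
move=> skewA; elim: k => [//|k IH]; rewrite ltnS leq_eqVlt /kron_at /= trmx_tens.
case/orP=> [/eqP->|lt_mu_k].
  by rewrite eqxx skewA tensmxNl -/(kron_at A k k) kron_at_ge // trmx1.
by rewrite gtn_eqF // trmx1 -/(kron_at A k mu) IH // tensmxNr.
Qed.

Lemma map_kron_at (K K' : pzRingType) (f : {rmorphism K -> K'})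
    (A : forall i, 'M[K]_(n i)) k mu :
  map_mx f (kron_at A k mu) = kron_at (fun i => map_mx f (A i)) k mu.
Proof.
rewrite map_kron_fac; apply: eq_kron_fac => i _.
by case: (i == mu); rewrite ?map_mx1.
Qed.

End KronFac.

Lemma sqr_clifford_sum (K : fieldType) n r D (A : forall i, 'M[K]_(n i))
    (gamma : nat -> 'M[K]_r) :
  2%:R != 0 :> K ->
  (forall mu nu, (mu < D)%N -> (nu < D)%N ->
     gamma mu *m gamma nu + gamma nu *m gamma mu = ((mu == nu)%:R *+ 2)%:M) ->
  let S := \sum_(mu < D) kron_at A D mu *t gamma mu in
  S *m S = (\sum_(mu < D) kron_at A D mu *m kron_at A D mu) *t 1%:M.
Proof.
move=> two_neq0 clifford S; pose X := kron_at A D.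
have SSE : S *m S = \sum_(mu < D) \sum_(nu < D) X mu *m X nu *t (gamma mu *m gamma nu).
  rewrite mulmx_suml; apply: eq_bigr => mu _; rewrite mulmx_sumr.
  by apply: eq_bigr => nu _; rewrite tensmx_mul.
have SSE' : S *m S = \sum_(mu < D) \sum_(nu < D) X mu *m X nu *t (gamma nu *m gamma mu).
  rewrite SSE exchange_big; apply: eq_bigr => mu _; apply: eq_bigr => nu _.
  by rewrite kron_at_comm.
apply: (@scalerI _ _ 2%:R) => //; rewrite !scaler_nat mulr2n {1}SSE SSE' -big_split.
rewrite mulr2n -tensmxDr tensmx_suml; apply: eq_bigr => mu _ /=.
rewrite -big_split (bigD1 mu) //= big1 => [|nu nu_neq_mu].
  by rewrite addr0 -tensmxDr clifford // eqxx mulr2n raddfD.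
by rewrite -tensmxDr clifford // val_eqE eq_sym (negbTE nu_neq_mu) mul0rn raddf0 tensmx0.
Qed.

(* [u (sum X_mu^2) u^T = - sum |u X_mu|^2] for skew-symmetric [X_mu]. *)
Lemma kermx_sum_sqr_skew (R : realFieldType) N D (X : 'I_D -> 'M[R]_N) :
  (forall mu, (X mu)^T = - X mu) ->
  (kermx (\sum_mu X mu *m X mu) <= \bigcap_(mu < D) kermx (X mu))%MS.
Proof.
move=> skewX; apply/sub_bigcapmxP => mu _; rewrite sub_kermx.
apply/eqP/row_matrixP => i; rewrite row_mul row0.
set L := \sum_mu _; set u := row i (kermx L).
have uL0 : u *m L = 0 by apply/eqP; rewrite -sub_kermx row_sub.
have quad nu : u *m (X nu *m X nu) *m u^T = - (u *m X nu *m (u *m X nu)^T).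
  by rewrite trmx_mul skewX mulNmx mulmxN opprK !mulmxA.
have sum_sqr0 : \sum_nu \sum_j ((u *m X nu) 0 j) ^+ 2 = 0.
  apply/eqP; rewrite -oppr_eq0 -sumrN; apply/eqP.
  transitivity ((u *m L *m u^T) 0 0); last by rewrite uL0 mul0mx mxE.
  rewrite mulmx_sumr mulmx_suml summxE; apply: eq_bigr => nu _.
  by rewrite quad mxE mxE; congr (- _); apply: eq_bigr => j _; rewrite !mxE expr2.
have /(_ mu isT) := psumr_eq0P (fun nu _ => sumr_ge0 _ (fun j _ => sqr_ge0 _)) sum_sqr0.
move/(psumr_eq0P (fun j _ => sqr_ge0 _)) => uX0.
by apply/rowP => j; rewrite [RHS]mxE; apply/eqP; rewrite -sqrf_eq0 uX0.
Qed.

Lemma kron_at_kernels_rank (F : fieldType) n (A : forall i, 'M[F]_(n i)) k :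
  (\rank (\bigcap_(mu < k) kermx (kron_at A k mu))
     <= \prod_(mu < k) (n mu - \rank (A mu)))%N.
Proof.
elim: k => [|k IH]; first by rewrite big_ord0 rank_leq_col.
set C := (\bigcap_(mu < k) _)%MS in IH; set C' := (\bigcap_(mu < k.+1) _)%MS.
suff sub : (C' <= row_base (kermx (A k)) *t row_base C)%MS.
  apply: leq_trans (mxrankS sub) _; apply: leq_trans (rank_leq_row _) _.
  by rewrite mxrank_ker big_ord_recr /= mulnC leq_mul.
apply/row_subP => i; set u := row i C'.
have uX0 (mu : 'I_k.+1) : u *m kron_at A k.+1 mu = 0.
  by apply/eqP; rewrite -sub_kermx; move/sub_bigcapmxP: (row_sub i C'); apply.
have [V defu] := vec_tens_surj u; rewrite defu; apply: vec_tens_sub_kermx_tens.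
  move: (uX0 ord_max); rewrite /kron_at /= eqxx -/(kron_at A k k) kron_at_ge //.
  by rewrite defu vec_tens_mul mulmx1 -(vec_tens0 F) => /vec_tens_inj.
rewrite eq_row_base; apply/row_subP => j; apply/sub_bigcapmxP => mu _.
move: (uX0 (widen_ord (leqnSn k) mu)); rewrite /kron_at /= gtn_eqF //.
rewrite defu vec_tens_mul trmx1 mul1mx -(vec_tens0 F) => /vec_tens_inj VX0.
by rewrite sub_kermx -row_mul VX0 row0.
Qed.

Lemma mxrank_mxsub (F : fieldType) m m' n n' (f : 'I_m' -> 'I_m)
    (g : 'I_n' -> 'I_n) (A : 'M[F]_(m, n)) :
  (\rank (mxsub f g A) <= \rank A)%N.
Proof.
have -> : mxsub f g A = rowsub f 1%:M *m (A *m colsub g 1%:M).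
  by rewrite mulmx_colsub mulmx1 -mxsub_mul mul1mx.
exact: leq_trans (mxrankM_maxr _ _) (mxrankM_maxl _ _).
Qed.

Lemma mxrank_ge_unitrig (F : fieldType) m n p (A : 'M[F]_(n, p))
    (f : 'I_m -> 'I_n) (g : 'I_m -> 'I_p) :
  is_trig_mx (mxsub f g A) -> (forall i, A (f i) (g i) = 1) -> (m <= \rank A)%N.
Proof.
move=> trig diag1; apply: leq_trans (mxrank_mxsub f g A).
rewrite mxrank_unit // unitmxE det_trig // big1 ?unitr1 // => i _.
by rewrite mxE diag1.
Qed.

Lemma Aas_rank_ge (F : fieldType) (G : digraph) m (f g : 'I_m -> 'I_(nv G)) :
  (forall i j, Aas F G (f i) (g j) = (i == j)%:R - ((val i == (val j).+2) : nat)%:R) ->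
  (m <= \rank (Aas F G))%N.
Proof.
move=> Afg; apply: (mxrank_ge_unitrig (f := f) (g := g)) => [|i].
  apply/is_trig_mxP => i j lt_ij; rewrite mxE Afg.
  have /negbTE -> : i != j by rewrite -val_eqE neq_ltn lt_ij.
  by rewrite ltn_eqF ?subrr //; apply: ltn_trans lt_ij (leqnSn _).
by move: (Afg i i); rewrite eqxx ltn_eqF ?subr0.
Qed.

Lemma tr_Aas (K : pzRingType) (G : digraph) : (Aas K G)^T = - Aas K G.
Proof. by apply/matrixP => i j; rewrite !mxE opprB. Qed.

Lemma beta0_Hamiltonian_path (G : digraph) : (0 < nv G)%N ->
  (forall k (lt_k1 : (k.+1 < nv G)%N),
     (Ordinal (ltnW lt_k1), Ordinal lt_k1) \in edges G) ->
  beta0 G = 1%N.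
Proof.
move=> nv_gt0 path_edges.
have sym : connect_sym (@und_adj G).
  by apply: sym_connect_sym => x y; rewrite /und_adj orbC.
have conn k (lt_k : (k < nv G)%N) :
    connect (@und_adj G) (Ordinal nv_gt0) (Ordinal lt_k).
  elim: k lt_k => [|k IH] lt_k; first by apply/eq_connect0/val_inj.
  by apply: connect_trans (IH (ltnW lt_k)) (connect1 _); rewrite /und_adj path_edges.
rewrite /beta0 -(n_comp_connect sym (Ordinal nv_gt0)).
by apply: eq_n_comp_r => -[k lt_k]; rewrite !inE conn.
Qed.

Lemma card_fun_graph n (S : {set 'I_n * 'I_n}) (h : 'I_n -> 'I_n) (A : {set 'I_n}) :
  (forall a b, ((a, b) \in S) = (a \in A) && (b == h a)) -> #|S| = #|A|.
Proof.
move=> defS; have -> : S = [set (a, h a) | a in A].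
  apply/setP => -[a b]; rewrite defS; apply/andP/imsetP => [[Aa /eqP->]|].
    by exists a.
  by case=> x Ax [-> ->].
by apply: card_imset => x y [].
Qed.

Lemma card_edges_path n : #|edges (path_digraph n.+1)| = n.
Proof.
rewrite (@card_fun_graph _ _ (fun a => inord a.+1) [set~ ord_max]).
  by rewrite cardsC1 card_ord.
move=> a b; rewrite !inE /= -val_eqE /=; apply/eqP/andP => [defb|].
  split; first by rewrite neq_ltn -ltnS -defb ltn_ord.
  by apply/eqP/val_inj; rewrite /= inordK // -defb.
case=> a_neq_max /eqP->; rewrite inordK //.
by move: a_neq_max (ltn_ord a) => /eqP; lia.
Qed.

Lemma card_edges_cycle n : #|edges (cycle_digraph n.+1)| = n.+1.
Proof.
rewrite (@card_fun_graph _ _ (fun a => inord (a.+1 %% n.+1)) [set: 'I_n.+1]).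
  by rewrite cardsT card_ord.
move=> a b; rewrite !inE /=; apply/eqP/eqP => [defb|->].
  by apply/val_inj; rewrite /= inordK // -defb.
by rewrite inordK // ltn_mod.
Qed.

Lemma betti_path n : (2 <= n)%N ->
  (beta0 (path_digraph n) + beta1 (path_digraph n) = 1)%N.
Proof.
case: n => // n _; have b0 : beta0 (path_digraph n.+1) = 1%N.
  by apply: beta0_Hamiltonian_path => // k lt_k1; rewrite inE.
by rewrite /beta1 b0 card_edges_path addn1 subnn.
Qed.

Lemma betti_cycle n : (3 <= n)%N ->
  (beta0 (cycle_digraph n) + beta1 (cycle_digraph n) = 2)%N.
Proof.
case: n => // n _; have b0 : beta0 (cycle_digraph n.+1) = 1%N.
  by apply: beta0_Hamiltonian_path => // k lt_k1; rewrite inE /= modn_small.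
by rewrite /beta1 b0 card_edges_cycle addn1 subSnn.
Qed.

Lemma corank_Aas_path (F : fieldType) n :
  (n - \rank (Aas F (path_digraph n)) <= 1)%N.
Proof.
case: n => // n; rewrite leq_subCl subn1 /=.
apply: (@Aas_rank_ge F (path_digraph n.+1) n (widen_ord (leqnSn n)) (lift ord0)).
by move=> i j; rewrite mxE !inE /= /bump /= add1n eqSS eq_sym.
Qed.

Lemma corank_Aas_cycle (F : fieldType) n : (3 <= n)%N ->
  (n - \rank (Aas F (cycle_digraph n)) <= 2)%N.
Proof.
case: n => [|[|[|n]]] // _; rewrite leq_subCl subn2 /=.
apply: (@Aas_rank_ge F (cycle_digraph n.+3) n.+1 (widen_ord (leqnSn _) \o widen_ord (leqnSn _))
  (lift ord0 \o widen_ord (leqnSn _))).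
move=> i j; rewrite mxE !inE /= /bump /= add1n.
have lt_i := ltn_ord i; have lt_j := ltn_ord j.
by rewrite !modn_small ?eqSS 1?eq_sym //; lia.
Qed.

Lemma corank_clifford_sum (R : realFieldType) (K : fieldType)
    (f : {rmorphism R -> K}) n r D (A : forall i, 'M[R]_(n i))
    (gamma : nat -> 'M[K]_r) :
  (forall i, (A i)^T = - A i) ->
  (forall mu nu, (mu < D)%N -> (nu < D)%N ->
     gamma mu *m gamma nu + gamma nu *m gamma mu = ((mu == nu)%:R *+ 2)%:M) ->
  (prodn n D * r
     - \rank (\sum_(mu < D) kron_at (fun i => map_mx f (A i)) D mu *t gamma mu)%R
   <= r * \prod_(mu < D) (n mu - \rank (A mu)))%N.
Proof.
move=> skewA clifford; set S := (X in (_ - \rank X)%N).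
set L := \sum_(mu < D) kron_at A D mu *m kron_at A D mu.
have two_neq0 : 2%:R != 0 :> K by rewrite -(rmorph_nat f) fmorph_eq0 pnatr_eq0.
have SSE : S *m S = map_mx f L *t 1%:M.
  rewrite sqr_clifford_sum // raddf_sum; congr (_ *t _); apply: eq_bigr => mu _.
  by rewrite -!map_kron_at -map_mxM.
have corank_L : (prodn n D - \rank L <= \prod_(mu < D) (n mu - \rank (A mu)))%N.
  rewrite -mxrank_ker; apply: leq_trans (kron_at_kernels_rank A D); apply: mxrankS.
  by apply: kermx_sum_sqr_skew => mu; apply: tr_kron_at.
apply: leq_trans (leq_sub2l _ (mxrankM_maxl S S)) _.
rewrite SSE -mxrank_ker; apply: leq_trans (kermx_tens1_rank _ _) _.
by rewrite mxrank_map mulnC leq_mul2l corank_L orbT.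
Qed.

Lemma map_Aas (K K' : pzRingType) (f : {rmorphism K -> K'}) (G : digraph) :
  map_mx f (Aas K G) = Aas K' G.
Proof. by apply/matrixP => i j; rewrite !mxE rmorphB !rmorph_nat. Qed.

Lemma prod_if2_count D (P : nat -> bool) :
  (\prod_(mu < D) (if P mu then 2 else 1) = 2 ^ count P (iota 0 D))%N.
Proof.
elim: D => [|D IH]; first by rewrite big_ord0.
rewrite -[D.+1]addn1 iotaD addn1 big_ord_recr IH count_cat /= expnD.
by case: (P D); rewrite ?muln1 ?expn1.
Qed.

Unset Implicit Arguments.
Theorem theorem6 (R : realType) (D d r : nat) (G : nat -> digraph)
  (is_cycle : nat -> bool) (gamma : nat -> 'M[complex R]_r) :
  (1 <= D)%N ->
  (forall mu, (mu < D)%N ->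
     if is_cycle mu then exists n, (3 <= n)%N /\ G mu = cycle_digraph n
     else exists n, (2 <= n)%N /\ G mu = path_digraph n) ->
  d = count is_cycle (iota 0 D) ->
  (forall mu nu, (mu < D)%N -> (nu < D)%N ->
     gamma mu *m gamma nu + gamma nu *m gamma mu = ((mu == nu)%:R *+ 2)%:M) ->
  ((prodn (fun i => nv (G i)) D * r - \rank (dirac D G gamma))
     <= r * \prod_(mu < D) (beta0 (G mu) + beta1 (G mu)))%N
  /\ (\prod_(mu < D) (beta0 (G mu) + beta1 (G mu)) = 2 ^ d)%N.
Proof.
move=> _ shapeG -> clifford.
have factor_bounds (mu : 'I_D) :
    (beta0 (G mu) + beta1 (G mu) = if is_cycle mu then 2 else 1)%N /\
    (nv (G mu) - \rank (Aas R (G mu)) <= beta0 (G mu) + beta1 (G mu))%N.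
  move: (shapeG mu (ltn_ord mu)); case: (is_cycle mu) => -[n [le_n ->]].
    by rewrite betti_cycle // corank_Aas_cycle.
  by rewrite betti_path // corank_Aas_path.
split; last first.
  by rewrite -prod_if2_count; apply: eq_bigr => mu _; case: (factor_bounds mu).
have -> : dirac D G gamma =
    \sum_(mu < D) kron_at (fun i => map_mx (real_complex R) (Aas R (G i))) D mu *t gamma mu.
  by apply: eq_bigr => mu _; congr (_ *t _); apply: eq_kron_fac => i _; rewrite map_Aas.
apply: leq_trans (corank_clifford_sum (real_complex R) (fun i => tr_Aas R (G i)) clifford) _.
by rewrite leq_mul2l leq_prod ?orbT // => mu _; case: (factor_bounds mu).
Qed.
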